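(* Let $w$ be an instance of Metric-MAXCUT on a finite set $V$, let $\gamma\ge1$ and let $(L,R)$ be a $\gamma$-locally stable cut. Then for every $x\in L$ and $z\in R$, $$w(x,z)\ge\left(\frac{\gamma^2-1}{\gamma}\right)\cdot\frac{w(x,R)}{\gamma|R|+|L|}.$$
   Context: An instance of Metric-MAXCUT is a finite set $V$ with a metric $w$. For $x\in V$ and $B\subseteq V$, $w(x,B)=\sum_{b\in B}w(x,b)$. A cut $(L,R)$ (partition of $V$, not necessarily maximal) is $\gamma$-locally stable if for every vertex $x$ the total weight of edges from $x$ to the opposite side is at least $\gamma$ times the total weight of edges from $x$ to its own side, i.e. $w(x,R)\ge\gamma w(x,L)$ for $x\in L$ and $w(z,L)\ge\gamma w(z,R)$ for $z\in R$. *)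

From mathcomp Require Import all_boot all_order all_algebra.
Set Implicit Arguments. Unset Strict Implicit. Unset Printing Implicit Defensive.
Import Order.TTheory GRing.Theory Num.Theory.
Local Open Scope ring_scope.

Definition is_metric (R : realFieldType) (V : finType) (w : V -> V -> R) : Prop :=
  [/\ forall x y, w x y = 0 <-> x = y,
      forall x y, 0 <= w x y,
      forall x y, w x y = w y x
    & forall x y z, w x z <= w x y + w y z].

Definition wset (R : realFieldType) (V : finType) (w : V -> V -> R)
  (x : V) (B : {set V}) : R := \sum_(b in B) w x b.

Definition locally_stable (R : realFieldType) (V : finType) (w : V -> V -> R)
  (gamma : R) (L Rs : {set V}) : Prop :=
  (forall x, x \in L -> wset w x Rs >= gamma * wset w x L) /\
  (forall z, z \in Rs -> wset w z L >= gamma * wset w z Rs).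

From mathcomp Require Import all_boot all_order all_algebra.
From mathcomp Require Import ring lra.
Set Implicit Arguments. Unset Strict Implicit.
Import Order.TTheory GRing.Theory Num.Theory.
Local Open Scope ring_scope.

(* By the triangle inequality, moving the base point from x to z changes
   w(., B) by at most |B| w(x,z).  Combining this with the stability of x and
   of z gives w(x,z) (gamma |R| + |L|) >= gamma w(x,R) - w(x,L), and the
   stability of x once more, gamma w(x,L) <= w(x,R), turns the right-hand side
   into (gamma^2 - 1) / gamma * w(x,R). *)

Section MetricCut.

Variables (R : realFieldType) (V : finType) (w : V -> V -> R).
Hypothesis w_metric : is_metric w.

Lemma wset_le_shift (x z : V) (B : {set V}) :
  wset w z B <= wset w x B + w x z * #|B|%:R.
Proof.
have [_ _ w_sym w_tri] := w_metric.
rewrite /wset mulr_natr -sumr_const -big_split /=.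
apply: ler_sum => y _; rewrite (w_sym x z) addrC; exact: w_tri.
Qed.

Lemma stable_dist_lower (gamma : R) (L Rs : {set V}) (x z : V) :
  0 <= gamma -> locally_stable w gamma L Rs -> z \in Rs ->
  gamma * wset w x Rs - wset w x L <= w x z * (gamma * #|Rs|%:R + #|L|%:R).
Proof.
move=> gamma_ge0 [_ stableR] zRs.
have [_ _ w_sym _] := w_metric.
have shiftR := wset_le_shift z x Rs; rewrite (w_sym z x) in shiftR.
have shiftL := wset_le_shift x z L.
have stable_z := stableR z zRs.
have : gamma * (wset w x Rs - w x z * #|Rs|%:R) <= gamma * wset w z Rs.
  by rewrite ler_wpM2l //; lra.
lra.
Qed.

End MetricCut.

Theorem proposition3 (R : realFieldType) (V : finType) (w : V -> V -> R)
  (gamma : R) (L Rs : {set V}) :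
  is_metric w -> 1 <= gamma ->
  Rs = ~: L ->
  locally_stable w gamma L Rs ->
  forall x z, x \in L -> z \in Rs ->
    w x z >= ((gamma ^+ 2 - 1) / gamma) *
             (wset w x Rs / (gamma * #|Rs|%:R + #|L|%:R)).
Proof.
move=> w_metric gamma_ge1 _ stable x z xL zRs.
have gamma_gt0 : 0 < gamma by lra.
have lower := stable_dist_lower w_metric x (ltW gamma_gt0) stable zRs.
have stable_x := stable.1 x xL.
have card_L : 1 <= #|L|%:R :> R by rewrite ler1n; apply/card_gt0P; exists x.
have card_R : 0 <= #|Rs|%:R :> R := ler0n _ _.
set S := wset w x Rs in lower stable_x *.
set D := gamma * #|Rs|%:R + #|L|%:R in lower *.
have D_gt0 : 0 < D by rewrite /D; nra.
rewrite mulf_div (mulrC gamma) ler_pdivrMr ?mulr_gt0 //.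
have -> : (gamma ^+ 2 - 1) * S =
    gamma * (gamma * S - wset w x L) + (gamma * wset w x L - S) by ring.
nra.
Qed.
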